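(* Let $G$ be a finite cyclic group (written additively) and let $\mathcal A=\mathcal O(K,G)$ be an orbit S-ring over $G$ for some subgroup $K\le\mathrm{Aut}(G)$. Suppose there is a basic set $X$ of $\mathcal A$ such that $X^{(-1)}\subseteq X+X$ and $X$ generates $G$. Then there exists an integer $b$ such that $Y^{(b)}=Y^{(-b-1)}=Y$ for every basic set $Y$ of $\mathcal A$. In particular, $Y^{(-1)}\subseteq Y+Y$ for every basic set $Y$.
   Context: An S-ring over a finite group $G$ is a subring $\mathcal A$ of the group ring $\mathbb{Z}[G]$ having a $\mathbb{Z}$-basis $\{\underline X:X\in\mathcal S\}$ for a partition $\mathcal S$ of $G$ with $\{0\}\in\mathcal S$ and $X^{(-1)}\in\mathcal S$ for all $X\in\mathcal S$, where $\underline X=\sum_{x\in X}x$; elements of $\mathcal S$ are basic sets. For $K\le\mathrm{Aut}(G)$, $\mathcal O(K,G)$ is the S-ring whose basic sets are the orbits of $K$ on $G$. For $X\subseteq G$ and an integer $m$, $X^{(m)}=\{mx:x\in X\}$, and $X+X=\{x+x':x,x'\in X\}$. *)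

(* The finite cyclic group G is a cyclic subgroup of a
   finGroupType, written multiplicatively (the paper's additive notation:
   x + y ~ x * y, m x ~ x ^ m, X + X ~ X * X). *)
From mathcomp Require Import all_boot all_algebra all_fingroup all_solvable.
Set Implicit Arguments. Unset Strict Implicit. Unset Printing Implicit Defensive.

Definition zexpg (gT : finGroupType) (x : gT) (m : int) : gT :=
  match m with
  | Posz n => x ^+ n
  | Negz n => (x ^+ n.+1)^-1
  end.

Definition spow (gT : finGroupType) (X : {set gT}) (m : int) : {set gT} :=
  [set zexpg x m | x in X].

(* Basic sets of the orbit S-ring O(K,G): the orbits of K on G. *)
Definition orbit_basic_sets (gT : finGroupType) (K : {group {perm gT}})
  (G : {group gT}) : {set {set gT}} :=
  orbit 'P K @: G.

(* Every automorphism of a cyclic group is a power map x |-> x^n, so each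
   element of K acts on G as a power map.  Since the orbit X of x0 consists of
   powers of x0 and generates G, x0 generates G.  Writing x0^-1 = t1(x0) t2(x0)
   with t1 = x^m1, t2 = x^m2 in K, the identity y^-1 = y^m1 y^m2 spreads from
   x0 to all of G; hence the power maps by b := m1 and by -b-1 (which equals
   x^m2 on G) are realised by elements of K and fix every orbit of K.  Finally
   y^-1 = y^b y^(-b-1) puts Y^(-1) inside Y Y. *)
From mathcomp Require Import all_boot all_algebra all_fingroup all_solvable.
Set Implicit Arguments. Unset Strict Implicit. Unset Printing Implicit Defensive.
Import GroupScope.

Lemma Aut_cycle_expg (gT : finGroupType) (a : gT) (f : {perm gT}) :
  f \in Aut <[a]> -> exists n, {in <[a]>, f =1 fun x => x ^+ n}.
Proof.
move=> Af; have: f a \in <[a]> by rewrite (Aut_closed Af) ?cycle_id.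
case/cycleP=> n fa; exists n => x /cycleP[k ->].
by rewrite -(autmE Af) morphX ?cycle_id //= autmE fa -!expgM mulnC.
Qed.

Lemma Aut_cyclic_expg (gT : finGroupType) (G : {group gT}) (f : {perm gT}) :
  cyclic G -> f \in Aut G -> exists n, {in G, f =1 fun x => x ^+ n}.
Proof. by case/cyclicP=> a ->; apply: Aut_cycle_expg. Qed.

Lemma cycle_expg_inv (gT : finGroupType) (a : gT) m n :
  a^-1 = a ^+ m * a ^+ n -> {in <[a]>, forall y, y^-1 = y ^+ m * y ^+ n}.
Proof.
move=> inv_a _ /cycleP[k ->].
rewrite -expgVn inv_a expgMn; last exact: commuteX2.
by rewrite -!expgM !(mulnC k).
Qed.

Lemma zexpgN1 (gT : finGroupType) (x : gT) : zexpg x (-1) = x^-1.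
Proof. by rewrite /= expg1. Qed.

Lemma zexpg_oppS (gT : finGroupType) (x : gT) (m : nat) :
  zexpg x (- Posz m - 1)%R = (x ^+ m.+1)^-1.
Proof. by rewrite -GRing.opprD -PoszD addn1 -NegzE. Qed.

Lemma zexpg_inv_split (gT : finGroupType) (x : gT) (b : int) :
  zexpg x b * zexpg x (- b - 1)%R = x^-1.
Proof.
case: b => n; first by rewrite zexpg_oppS expgS invMg /= mulKVg.
have -> : (- Negz n - 1)%R = Posz n.
  by rewrite NegzE GRing.opprK -addn1 PoszD GRing.addrK.
by rewrite /= expgSr invMg mulgKV.
Qed.

Lemma spowN1_subset (gT : finGroupType) (Y : {set gT}) (b : int) :
  spow Y b = Y -> spow Y (- b - 1)%R = Y -> spow Y (-1) \subset Y * Y.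
Proof.
move=> Yb Yb'; apply/subsetP=> _ /imsetP[y Yy ->].
rewrite zexpgN1 -(zexpg_inv_split y b) mem_mulg //.
  by rewrite -Yb imset_f.
by rewrite -Yb' imset_f.
Qed.

Lemma imset_orbit_perm (gT : finGroupType) (K : {group {perm gT}}) t y :
  t \in K -> t @: orbit 'P K y = orbit 'P K y.
Proof.
move=> Kt; have nKt := subsetP (acts_orbit 'P y (subsetT K)) t Kt.
by rewrite -{2}(astabs_setact nKt) setactE.
Qed.

Section PowerMapOrbits.

Variables (gT : finGroupType) (G : {group gT}) (K : {group {perm gT}}).
Hypothesis sKAut : K \subset Aut G.

Lemma orbit_perm_sub y : y \in G -> orbit 'P K y \subset G.
Proof.
move=> Gy; apply/subsetP=> _ /orbitP[s Ks <-].
by rewrite /= apermE (Aut_closed (subsetP sKAut s Ks)).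
Qed.

Lemma spow_orbit t m y :
  y \in G -> t \in K -> {in G, t =1 fun x => zexpg x m} ->
  spow (orbit 'P K y) m = orbit 'P K y.
Proof.
move=> Gy Kt tG; rewrite -{2}(imset_orbit_perm y Kt).
by apply: eq_in_imset => z /(subsetP (orbit_perm_sub Gy)) /tG.
Qed.

Lemma orbit_sub_cycle y :
  {in K, forall t : {perm gT}, exists n, {in G, t =1 fun x => x ^+ n}} ->
  y \in G -> orbit 'P K y \subset <[y]>.
Proof.
move=> expK Gy; apply/subsetP=> _ /orbitP[s Ks <-].
by have [n sG] := expK s Ks; rewrite /= apermE sG // mem_cycle.
Qed.

End PowerMapOrbits.

Theorem lemma4p6 (gT : finGroupType) (G : {group gT})
  (K : {group {perm gT}}) (X : {set gT}) :
  cyclic G ->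
  K \subset Aut G ->
  X \in orbit_basic_sets K G ->
  spow X (-1)%R \subset (X * X)%g ->
  <<X>>%g = G ->
  (exists b : int, forall Y, Y \in orbit_basic_sets K G ->
      spow Y b = Y /\ spow Y (- b - 1)%R = Y) /\
  (forall Y, Y \in orbit_basic_sets K G -> spow Y (-1)%R \subset (Y * Y)%g).
Proof.
move=> cycG sKAut /imsetP[x0 Gx0 ->] X_inv genX.
have expK : {in K, forall t : {perm gT}, exists n, {in G, t =1 fun x => x ^+ n}}.
  by move=> t Kt; apply: Aut_cyclic_expg (subsetP sKAut t Kt).
have sGx0 : G \subset <[x0]>.
  by rewrite -genX gen_subG (orbit_sub_cycle expK Gx0).
have X_x0inv : x0^-1 \in spow (orbit 'P K x0) (-1).
  by rewrite -zexpgN1 imset_f ?orbit_refl.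
have [_ _ /orbitP[t1 Kt1 <-] /orbitP[t2 Kt2 <-]] := mulsgP (subsetP X_inv _ X_x0inv).
have [[m1 t1G] [m2 t2G]] := (expK t1 Kt1, expK t2 Kt2).
rewrite /= !apermE t1G ?t2G // => /cycle_expg_inv invG.
have [b Kb] : exists b : int, forall Y, Y \in orbit_basic_sets K G ->
    spow Y b = Y /\ spow Y (- b - 1)%R = Y.
  exists (Posz m1) => _ /imsetP[y Gy ->]; split.
    by apply: (spow_orbit sKAut Gy Kt1) => x Gx; rewrite t1G.
  apply: (spow_orbit sKAut Gy Kt2) => x Gx.
  rewrite zexpg_oppS t2G // expgSr invMg invG ?(subsetP sGx0) //.
  by rewrite (commuteX2 m1 m2 (commute_refl x)) mulgK.
split; first by exists b.
by move=> Y /Kb[]; apply: spowN1_subset.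
Qed.
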